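(* Let $X$ be a set of pointed Kripke models, $\Lambda$ a normal modal logic sound with respect to $X$, and $D\subseteq\boldsymbol{\mathcal{L}}_{\Lambda}$ a descriptor. If $\Lambda$ is compact and $D$ is $\Lambda$-representative, then $[\boldsymbol{\varphi}]_D$ is clopen in $\mathcal{T}_D$ for every $\boldsymbol{\varphi}\in\boldsymbol{\mathcal{L}}_{\Lambda}$. If moreover $X$ is saturated with respect to $D$, then $\mathcal{T}_D$ reflects $\Lambda$.
   Context: Signature: countable non-empty sets $\Phi$, $\mathcal{I}$; $\mathcal{L}$: $\varphi ::= \top\mid p\mid\neg\varphi\mid\varphi\wedge\varphi\mid\Box_i\varphi$ on pointed Kripke models, standard semantics. $\boldsymbol{\varphi}$: formulas $\Lambda$-provably equivalent to $\varphi$; $\boldsymbol{\mathcal{L}}_{\Lambda}=\{\boldsymbol{\varphi}\}$. $\Lambda$ is compact if a set of formulas is $\Lambda$-consistent iff all its finite subsets are. For $D\subseteq\boldsymbol{\mathcal{L}}_{\Lambda}$: $\boldsymbol{x}_D=\{y\in X:\forall\boldsymbol{\varphi}\in D,\ y\models\varphi\iff x\models\varphi\}$, $X_D=\{\boldsymbol{x}_D:x\in X\}$; $\mathcal{T}_D$ is generated by the subbasis $\{\boldsymbol{x}:x\models\varphi\}$, $\{\boldsymbol{x}:x\models\neg\varphi\}$, $\boldsymbol{\varphi}\in D$. $D$ is $\Lambda$-representative if for every $\varphi\in\mathcal{L}$ there is $\{\boldsymbol{\psi}_i\}_{i\in I}\subseteq D$ such that for every $J\subseteq I$, $\{\psi_i\}_{i\in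 J}\cup\{\neg\psi_i\}_{i\in I\setminus J}$ $\Lambda$-entails $\varphi$ or $\neg\varphi$. $X$ is saturated w.r.t. $D$ if for all $Y,Y'\subseteq D$ with $B=\{\varphi:\boldsymbol{\varphi}\in Y\}\cup\{\neg\varphi:\boldsymbol{\varphi}\in Y'\}$ $\Lambda$-consistent, some $x\in X$ satisfies all of $B$. For $\boldsymbol{\varphi}\in\boldsymbol{\mathcal{L}}_{\Lambda}$, $[\boldsymbol{\varphi}]_D=\{\boldsymbol{x}\in X_D:\forall x\in\boldsymbol{x},\ x\models\varphi\}$. $\mathcal{T}_D$ reflects $\Lambda$ if for every $Y\subseteq X_D$: $Y$ is clopen in $\mathcal{T}_D$ iff $Y=[\boldsymbol{\varphi}]_D$ for some $\boldsymbol{\varphi}\in\boldsymbol{\mathcal{L}}_{\Lambda}$. *)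

From Stdlib Require Import List.
Import ListNotations.
Set Implicit Arguments.

Definition countable (T : Type) : Prop :=
  exists f : T -> nat, forall a b, f a = f b -> a = b.

Section Modal.
Variables (Phi I : Type).

Inductive form : Type :=
| Top : form
| Var : Phi -> form
| Neg : form -> form
| And : form -> form -> form
| Box : I -> form -> form.

Definition Imp (a b : form) : form := Neg (And a (Neg b)).
Definition Iff (a b : form) : form := And (Imp a b) (Imp b a).

Record model : Type := Model {
  W : Type;
  Rel : I -> W -> W -> Prop;
  Val : Phi -> W -> Prop }.

Record pointed : Type := Pointed { pm : model; pw : W pm }.

Fixpoint sat (M : model) (w : W M) (f : form) : Prop :=
  match f with
  | Top => True
  | Var p => Val M p w
  | Neg g => ~ sat M w g
  | And g h => sat M w g /\ sat M w h
  | Box i g => forall v, Rel M i w v -> sat M v g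
  end.

Definition psat (x : pointed) (f : form) : Prop := sat (pm x) (pw x) f.

(* propositional tautologies: boolean valuations treating atoms and
   boxed formulas as propositional atoms *)
Fixpoint peval (v : form -> bool) (f : form) : bool :=
  match f with
  | Top => true
  | Var p => v (Var p)
  | Neg g => negb (peval v g)
  | And g h => andb (peval v g) (peval v h)
  | Box i g => v (Box i g)
  end.

Definition tautology (f : form) : Prop := forall v, peval v f = true.

Fixpoint subst (s : Phi -> form) (f : form) : form :=
  match f with
  | Top => Top
  | Var p => s p
  | Neg g => Neg (subst s g)
  | And g h => And (subst s g) (subst s h)
  | Box i g => Box i (subst s g)
  end.

Record normal_logic (L : form -> Prop) : Prop := {
  nl_taut : forall f, tautology f -> L f;
  nl_K : forall i a b, L (Imp (Box i (Imp a b)) (Imp (Box i a) (Box i b)));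
  nl_MP : forall a b, L (Imp a b) -> L a -> L b;
  nl_Nec : forall i a, L a -> L (Box i a);
  nl_US : forall s a, L a -> L (subst s a) }.

Definition sound (L : form -> Prop) (X : pointed -> Prop) : Prop :=
  forall f x, L f -> X x -> psat x f.

Definition Lequiv (L : form -> Prop) (a b : form) : Prop := L (Iff a b).

Fixpoint conj (l : list form) : form :=
  match l with
  | [] => Top
  | a :: l => And a (conj l)
  end.

Definition consistent (L : form -> Prop) (B : form -> Prop) : Prop :=
  ~ exists l : list form, (forall a, In a l -> B a) /\ L (Neg (conj l)).

Definition entails (L : form -> Prop) (B : form -> Prop) (f : form) : Prop :=
  exists l : list form, (forall a, In a l -> B a) /\ L (Imp (conj l) f).

Definition finite_set (B : form -> Prop) : Prop :=
  exists l : list form, forall a, B a <-> In a l.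

Definition compact (L : form -> Prop) : Prop :=
  forall B, consistent L B <->
    (forall B', finite_set B' -> (forall a, B' a -> B a) -> consistent L B').

(* A subset D of the Lindenbaum classes L_Lambda is represented by the set
   of all formulas whose class lies in D, i.e. a set of formulas closed
   under Lambda-provable equivalence. *)
Definition descriptor (L : form -> Prop) (D : form -> Prop) : Prop :=
  forall a b, Lequiv L a b -> D a -> D b.

Definition representative (L : form -> Prop) (D : form -> Prop) : Prop :=
  forall f, exists (J : Type) (psi : J -> form),
    (forall j, D (psi j)) /\
    forall S : J -> Prop,
      let B := fun c => exists j, (S j /\ c = psi j) \/ (~ S j /\ c = Neg (psi j)) in
      entails L B f \/ entails L B (Neg f).

Section Space.
Variables (X : pointed -> Prop) (D : form -> Prop).

Definition xD (x : pointed) : pointed -> Prop :=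
  fun y => X y /\ forall f, D f -> (psat y f <-> psat x f).

Definition XD (c : pointed -> Prop) : Prop := exists x, X x /\ c = xD x.

Definition sb (b : bool) (f : form) (c : pointed -> Prop) : Prop :=
  XD c /\ forall x, c x -> psat x (if b then f else Neg f).

(* open sets of the topology T_D on X_D generated by the subbasis
   {sb b f | f in D}: unions of finite intersections of subbasic sets *)
Definition openD (U : (pointed -> Prop) -> Prop) : Prop :=
  (forall c, U c -> XD c) /\
  forall c, U c -> exists l : list (bool * form),
    (forall p, In p l -> D (snd p)) /\
    (forall p, In p l -> sb (fst p) (snd p) c) /\
    (forall c', XD c' -> (forall p, In p l -> sb (fst p) (snd p) c') -> U c').

Definition clopenD (U : (pointed -> Prop) -> Prop) : Prop :=
  openD U /\ openD (fun c => XD c /\ ~ U c).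

Definition bracket (f : form) : (pointed -> Prop) -> Prop :=
  fun c => XD c /\ forall x, c x -> psat x f.

Definition saturated (L : form -> Prop) : Prop :=
  forall Y Y' : form -> Prop,
    (forall a, Y a -> D a) -> (forall a, Y' a -> D a) ->
    descriptor L Y -> descriptor L Y' ->
    let B := fun c => Y c \/ exists a, Y' a /\ c = Neg a in
    consistent L B -> exists x, X x /\ forall c, B c -> psat x c.

Definition reflects (L : form -> Prop) : Prop :=
  forall Y : (pointed -> Prop) -> Prop, (forall c, Y c -> XD c) ->
    (clopenD Y <-> exists f, forall c, Y c <-> bracket f c).

End Space.
End Modal.

(* Representativity gives, around each point x, finitely many D-literals true at x
   that Lambda-entail phi or its negation; by soundness they decide phi on every point
   satisfying them, so [phi]_D and its complement are open.
   Conversely, saturation makes X_D compact: if the negated conjunctions of the basic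
   sets of a cover were jointly consistent, a Lindenbaum extension along an enumeration
   of the countably many formulas would give a complete D-type, realized by a point of
   X lying in no set of the cover. A clopen Y is covered by basic sets contained in Y or
   in its complement; finitely many suffice, and Y is the bracket of the disjunction of
   those contained in Y. *)

From Stdlib Require Import List Classical FunctionalExtensionality PropExtensionality Cantor.
Import ListNotations.

Lemma list_in_image {A B : Type} (P : B -> Prop) (g : B -> A) (l : list A) :
  (forall a, In a l -> exists b, P b /\ a = g b) ->
  exists lb, (forall b, In b lb -> P b) /\ l = map g lb.
Proof.
  induction l as [|a l IH]; intros Hl.
  - now exists [].
  - destruct (Hl a (or_introl eq_refl)) as (b & Hb & ->).
    destruct IH as (lb & Hlb & ->); [intros; apply Hl; now right|].
    exists (b :: lb); split; [intros b' [<-|Hb']; auto|reflexivity].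
Qed.

Lemma list_split {A : Type} (P Q : A -> Prop) (l : list A) :
  (forall a, In a l -> P a \/ Q a) ->
  exists lP, (forall a, In a lP -> P a) /\ (forall a, In a l -> In a lP \/ Q a).
Proof.
  induction l as [|a l IH]; intros Hl.
  - exists []; simpl; tauto.
  - destruct IH as (lP & HP & Hcov); [intros; apply Hl; now right|].
    destruct (Hl a (or_introl eq_refl)) as [Ha|Ha].
    + exists (a :: lP); split.
      * intros b [<-|Hb]; auto.
      * intros b [<-|Hb]; [left; now left|].
        destruct (Hcov b Hb); [left; now right|auto].
    + exists lP; split; [exact HP|]. intros b [<-|Hb]; auto.
Qed.

Lemma to_nat_inj (a b c d : nat) :
  Cantor.to_nat (a, b) = Cantor.to_nat (c, d) -> a = c /\ b = d.
Proof.
  intros H. apply (f_equal Cantor.of_nat) in H.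
  rewrite !Cantor.cancel_of_to in H. now injection H.
Qed.

Section Countable.
Variables (Phi I : Type) (cPhi : Phi -> nat) (cI : I -> nat).

Fixpoint form_code (f : form Phi I) : nat :=
  match f with
  | Top _ _ => 0
  | Var _ p => S (Cantor.to_nat (0, cPhi p))
  | Neg g => S (Cantor.to_nat (1, form_code g))
  | And g h => S (Cantor.to_nat (2, Cantor.to_nat (form_code g, form_code h)))
  | Box i g => S (Cantor.to_nat (3, Cantor.to_nat (cI i, form_code g)))
  end.

Lemma form_code_inj :
  (forall p q, cPhi p = cPhi q -> p = q) -> (forall i j, cI i = cI j -> i = j) ->
  forall f g, form_code f = form_code g -> f = g.
Proof.
  intros HPhi HI.
  induction f as [|p|f IH|f1 IH1 f2 IH2|i f IH]; intros [|q|g|g1 g2|j g] H;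
    cbn [form_code] in H; try discriminate; try reflexivity;
    apply eq_add_S, to_nat_inj in H as [Htag H]; try discriminate;
    try apply to_nat_inj in H as [H1 H2]; f_equal; auto.
Qed.

End Countable.

Lemma countable_form (Phi I : Type) :
  countable Phi -> countable I -> countable (form Phi I).
Proof.
  intros [cPhi HPhi] [cI HI].
  exists (form_code Phi I cPhi cI). now apply form_code_inj.
Qed.

Section Propositional.
Context {Phi I : Type} {L : form Phi I -> Prop}.
Hypothesis HL : normal_logic L.

Definition extend (B : form Phi I -> Prop) (g : form Phi I) : form Phi I -> Prop :=
  fun a => B a \/ a = g.

Lemma peval_conj (v : form Phi I -> bool) (l : list (form Phi I)) :
  peval v (conj l) = true <-> forall a, In a l -> peval v a = true.
Proof.
  induction l as [|b l IH]; simpl.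
  - split; [intros _ a []|reflexivity].
  - rewrite Bool.andb_true_iff, IH. split.
    + intros [Hb Hl] a [<-|Ha]; auto.
    + intros H; split; auto.
Qed.

Lemma L_tauto_consequence (a c : form Phi I) :
  L a -> (forall v, peval v a = true -> peval v c = true) -> L c.
Proof.
  intros Ha Hac. apply (nl_MP HL a c); [|exact Ha].
  apply (nl_taut HL). intros v. specialize (Hac v). simpl.
  destruct (peval v a), (peval v c); auto.
Qed.

Lemma L_tauto_consequence2 (a b c : form Phi I) :
  L a -> L b -> (forall v, peval v a = true -> peval v b = true -> peval v c = true) -> L c.
Proof.
  intros Ha Hb Habc. apply (nl_MP HL b c); [|exact Hb].
  apply (L_tauto_consequence _ _ Ha). intros v Hv. specialize (Habc v Hv). simpl.
  destruct (peval v b), (peval v c); auto.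
Qed.

Lemma consistent_sub {B B' : form Phi I -> Prop} :
  consistent L B -> (forall a, B' a -> B a) -> consistent L B'.
Proof. intros HB HB'B [l [Hl HLl]]. apply HB. exists l; auto. Qed.

Lemma consistent_extend (B : form Phi I -> Prop) (g : form Phi I) :
  consistent L B -> consistent L (extend B g) \/ consistent L (extend B (Neg g)).
Proof.
  intros HB. apply NNPP. intros Hboth. apply not_or_and in Hboth as [Hg Hng].
  apply NNPP in Hg as (l1 & Hl1 & HL1). apply NNPP in Hng as (l2 & Hl2 & HL2).
  destruct (list_split B (fun a => a = g) l1 Hl1) as (l1' & HB1 & Hcov1).
  destruct (list_split B (fun a => a = Neg g) l2 Hl2) as (l2' & HB2 & Hcov2).
  apply HB. exists (l1' ++ l2'). split.
  { intros a Ha. apply in_app_or in Ha as [Ha|Ha]; auto. }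
  apply (L_tauto_consequence2 _ _ _ HL1 HL2). simpl. intros v Hv1 Hv2.
  destruct (peval v (conj (l1' ++ l2'))) eqn:E; [exfalso|reflexivity].
  rewrite peval_conj in E.
  (* the valuation of [g] selects which of the two refuted lists it satisfies *)
  destruct (peval v g) eqn:Eg.
  - assert (R : peval v (conj l1) = true).
    { apply peval_conj. intros a Ha.
      destruct (Hcov1 a Ha) as [Ha'| ->]; auto using in_or_app. }
    now rewrite R in Hv1.
  - assert (R : peval v (conj l2) = true).
    { apply peval_conj. intros a Ha.
      destruct (Hcov2 a Ha) as [Ha'| ->]; [auto using in_or_app|simpl; now rewrite Eg]. }
    now rewrite R in Hv2.
Qed.

Lemma Lequiv_refute (a b : form Phi I) :
  Lequiv L a b -> L (Neg (conj [a; Neg b])) /\ L (Neg (conj [Neg a; b])).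
Proof.
  intros Hab. split; apply (L_tauto_consequence _ _ Hab); intros v; simpl;
    destruct (peval v a), (peval v b); auto.
Qed.

End Propositional.

Section Lindenbaum.
Context {Phi I : Type} {L : form Phi I -> Prop}.
Hypothesis HL : normal_logic L.
Variable code : form Phi I -> nat.
Hypothesis code_inj : forall f g, code f = code g -> f = g.
Variables (D B : form Phi I -> Prop).

Fixpoint stage (n : nat) : form Phi I -> Prop :=
  match n with
  | 0 => B
  | S n => fun a => stage n a \/ exists g, code g = n /\ D g /\
      ((consistent L (extend (stage n) g) /\ a = g) \/
       (~ consistent L (extend (stage n) g) /\ a = Neg g))
  end.

Lemma stage_consistent (n : nat) : consistent L B -> consistent L (stage n).
Proof.
  intros HB. induction n as [|n IHn]; [exact HB|].
  destruct (classic (exists g, code g = n /\ D g)) as [(g & Hg & _)|Hnone].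
  - assert (Hcode : forall g', code g' = n -> g' = g)
      by (intros g' Hg'; apply code_inj; congruence).
    destruct (classic (consistent L (extend (stage n) g))) as [Hc|Hnc].
    + apply (consistent_sub Hc).
      intros a [Ha|(g' & Hg' & _ & [[_ ->]|[Hnc' _]])]; [now left| |].
      * right. now apply Hcode.
      * rewrite (Hcode g' Hg') in Hnc'. contradiction.
    + destruct (consistent_extend HL (stage n) g IHn) as [Hc|Hc]; [contradiction|].
      apply (consistent_sub Hc).
      intros a [Ha|(g' & Hg' & _ & [[Hc' _]|[_ ->]])]; [now left| |].
      * rewrite (Hcode g' Hg') in Hc'. contradiction.
      * right. now rewrite (Hcode g' Hg').
  - apply (consistent_sub IHn).
    intros a [Ha|(g & Hg & HDg & _)]; [exact Ha|]. exfalso. eauto.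
Qed.

Lemma stage_mono (n m : nat) (a : form Phi I) : n <= m -> stage n a -> stage m a.
Proof. induction 1; simpl; auto. Qed.

Lemma stage_bound (l : list (form Phi I)) :
  (forall a, In a l -> exists n, stage n a) -> exists N, forall a, In a l -> stage N a.
Proof.
  induction l as [|b l IH]; intros Hl; [now exists 0|].
  destruct (Hl b (or_introl eq_refl)) as [n Hn].
  destruct IH as [N HN]; [intros; apply Hl; now right|].
  exists (max n N). intros a [<-|Ha].
  - apply (stage_mono n); [apply PeanoNat.Nat.le_max_l|exact Hn].
  - apply (stage_mono N); [apply PeanoNat.Nat.le_max_r|auto].
Qed.

Lemma lindenbaum :
  consistent L B -> exists G : form Phi I -> Prop,
    (forall a, B a -> G a) /\ consistent L G /\ (forall g, D g -> G g \/ G (Neg g)).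
Proof.
  intros HB. exists (fun a => exists n, stage n a). split; [|split].
  - intros a Ha. now exists 0.
  - intros [l [Hl HLl]]. destruct (stage_bound l Hl) as [N HN].
    apply (stage_consistent N HB). now exists l.
  - intros g Hg.
    destruct (classic (consistent L (extend (stage (code g)) g))) as [Hc|Hnc];
      [left|right]; exists (S (code g)); right; exists g; auto.
Qed.

End Lindenbaum.

Section Semantics.
Context {Phi I : Type}.

Definition lit (p : bool * form Phi I) : form Phi I :=
  if fst p then snd p else Neg (snd p).

Definition conj_lits (l : list (bool * form Phi I)) : form Phi I := conj (map lit l).

Definition disj (l : list (form Phi I)) : form Phi I := Neg (conj (map (fun a => Neg a) l)).

Lemma psat_conj (x : pointed Phi I) (l : list (form Phi I)) :
  psat x (conj l) <-> forall a, In a l -> psat x a.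
Proof.
  induction l as [|b l IH].
  - split; [intros _ a []|intros _; exact Logic.I].
  - change (psat x (conj (b :: l))) with (psat x b /\ psat x (conj l)).
    rewrite IH. split.
    + intros [Hb Hl] a [<-|Ha]; auto.
    + intros H; split; auto using in_eq, in_cons.
Qed.

Lemma psat_conj_lits (x : pointed Phi I) (l : list (bool * form Phi I)) :
  psat x (conj_lits l) <-> forall p, In p l -> psat x (lit p).
Proof.
  unfold conj_lits. rewrite psat_conj. split.
  - intros H p Hp. apply H, in_map, Hp.
  - intros H a Ha. apply in_map_iff in Ha as (p & <- & Hp). auto.
Qed.

Lemma psat_disj (x : pointed Phi I) (l : list (form Phi I)) :
  psat x (disj l) <-> exists a, In a l /\ psat x a.
Proof.
  change (~ psat x (conj (map (fun a => Neg a) l)) <-> exists a, In a l /\ psat x a).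
  rewrite psat_conj. split.
  - intros H. apply NNPP. intros Hnone. apply H. intros na Hna.
    apply in_map_iff in Hna as (a & <- & Ha). intros Hxa. eauto.
  - intros (a & Ha & Hxa) H. exact (H (Neg a) (in_map (fun a => Neg a) _ _ Ha) Hxa).
Qed.

Lemma sound_psat {L : form Phi I -> Prop} {X : pointed Phi I -> Prop} (a b : form Phi I)
  (x : pointed Phi I) :
  sound L X -> X x -> L (Imp a b) -> psat x a -> psat x b.
Proof.
  intros Hs Hx Hab Ha. pose proof (Hs _ _ Hab Hx) as H.
  unfold psat in *; simpl in *. apply NNPP; tauto.
Qed.

End Semantics.

Section Topology.
Context {Phi I : Type} (X : pointed Phi I -> Prop) (D : form Phi I -> Prop).

Definition D_lits (l : list (bool * form Phi I)) : Prop := forall p, In p l -> D (snd p).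

Definition basic_within (U : (pointed Phi I -> Prop) -> Prop) (l : list (bool * form Phi I))
  : Prop :=
  forall y, X y -> psat y (conj_lits l) -> U (xD X D y).

Definition interior_point (U : (pointed Phi I -> Prop) -> Prop) (x : pointed Phi I) : Prop :=
  exists l, D_lits l /\ psat x (conj_lits l) /\ basic_within U l.

Definition decided_near (f : form Phi I) (x : pointed Phi I) : Prop :=
  exists l, D_lits l /\ psat x (conj_lits l) /\
    forall z, X z -> psat z (conj_lits l) -> (psat z f <-> psat x f).

Lemma xD_self (x : pointed Phi I) : X x -> xD X D x x.
Proof. intros Hx. split; [exact Hx|tauto]. Qed.

Lemma psat_lit_xD (x z : pointed Phi I) (p : bool * form Phi I) :
  xD X D x z -> D (snd p) -> (psat z (lit p) <-> psat x (lit p)).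
Proof.
  intros [_ Hz] Hp. specialize (Hz _ Hp).
  destruct p as [[|] g]; simpl in *; [exact Hz|]. unfold psat in *; simpl; tauto.
Qed.

Lemma psat_conj_lits_xD (x z : pointed Phi I) (l : list (bool * form Phi I)) :
  xD X D x z -> D_lits l -> (psat z (conj_lits l) <-> psat x (conj_lits l)).
Proof.
  intros Hz Hl. rewrite !psat_conj_lits.
  split; intros H p Hp; [rewrite <- (psat_lit_xD x z p)|rewrite (psat_lit_xD x z p)]; auto.
Qed.

Lemma subbasic_xD (x : pointed Phi I) (l : list (bool * form Phi I)) :
  X x -> D_lits l ->
  ((forall p, In p l -> sb X D (fst p) (snd p) (xD X D x)) <-> psat x (conj_lits l)).
Proof.
  intros Hx Hl. rewrite psat_conj_lits. split.
  - intros H p Hp. exact (proj2 (H p Hp) x (xD_self x Hx)).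
  - intros H p Hp. split; [now exists x|]. intros z Hz.
    apply (psat_lit_xD x z p Hz (Hl p Hp)), H, Hp.
Qed.

Lemma openD_iff (U : (pointed Phi I -> Prop) -> Prop) :
  (forall c, U c -> XD X D c) ->
  (openD X D U <-> forall x, X x -> U (xD X D x) -> interior_point U x).
Proof.
  intros HU. split.
  - intros [_ Hopen] x Hx Hux. destruct (Hopen _ Hux) as (l & Hl & Hxl & Hsub).
    exists l. split; [exact Hl|split].
    + now apply (subbasic_xD x l Hx Hl).
    + intros y Hy Hyl. apply Hsub; [now exists y|]. now apply subbasic_xD.
  - intros Hint. split; [exact HU|]. intros c Hc.
    destruct (HU c Hc) as (x & Hx & ->).
    destruct (Hint x Hx Hc) as (l & Hl & Hxl & Hsub).
    exists l. split; [exact Hl|split].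
    + now apply subbasic_xD.
    + intros c' (y & Hy & ->) Hyl. apply (Hsub y Hy). now apply (subbasic_xD y l Hy Hl).
Qed.

Lemma bracket_clopen_of_decided (f : form Phi I) :
  (forall x, X x -> decided_near f x) -> clopenD X D (bracket X D f).
Proof.
  intros Hdec.
  assert (Hbr : forall x, X x -> (bracket X D f (xD X D x) <-> psat x f)).
  { intros x Hx. destruct (Hdec x Hx) as (l & Hl & Hxl & Hl_dec). split.
    - intros [_ H]. apply H, xD_self, Hx.
    - intros Hxf. split; [now exists x|]. intros z Hz.
      apply (Hl_dec z (proj1 Hz)); [|exact Hxf].
      now apply (psat_conj_lits_xD x z l Hz Hl). }
  split; apply openD_iff; try (intros c [Hc _]; exact Hc).
  - intros x Hx Hxf. apply (Hbr x Hx) in Hxf.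
    destruct (Hdec x Hx) as (l & Hl & Hxl & Hl_dec).
    exists l. split; [exact Hl|split; [exact Hxl|]]. intros y Hy Hyl.
    apply (Hbr y Hy), (Hl_dec y Hy Hyl), Hxf.
  - intros x Hx [_ Hxf]. rewrite (Hbr x Hx) in Hxf.
    destruct (Hdec x Hx) as (l & Hl & Hxl & Hl_dec).
    exists l. split; [exact Hl|split; [exact Hxl|]]. intros y Hy Hyl.
    split; [now exists y|]. rewrite (Hbr y Hy), (Hl_dec y Hy Hyl). exact Hxf.
Qed.

End Topology.

Section Representative.
Context {Phi I : Type} {X : pointed Phi I -> Prop} {L D : form Phi I -> Prop}.
Hypotheses (Hsound : sound L X) (Hrep : representative L D).

Lemma representative_decided (f : form Phi I) (x : pointed Phi I) :
  X x -> decided_near X D f x.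
Proof.
  intros Hx. destruct (Hrep f) as (J & psi & HDpsi & Hent).
  specialize (Hent (fun j => psat x (psi j))). cbv zeta in Hent.
  assert (Hlits : forall l0, (forall a, In a l0 -> exists j,
      (psat x (psi j) /\ a = psi j) \/ (~ psat x (psi j) /\ a = Neg (psi j))) ->
    exists l, D_lits D l /\ psat x (conj_lits l) /\ l0 = map lit l).
  { intros l0 Hl0.
    destruct (list_in_image (fun p => D (snd p) /\ psat x (lit p)) lit l0)
      as (l & Hl & ->).
    - intros a Ha.
      destruct (Hl0 a Ha) as (j & [[Hj ->]|[Hj ->]]);
        [exists (true, psi j)|exists (false, psi j)]; simpl; auto.
    - exists l. split; [|split; [apply psat_conj_lits|reflexivity]];
        intros p Hp; apply (Hl p Hp). }
  destruct Hent as [(l0 & Hl0 & Himp)|(l0 & Hl0 & Himp)];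
    destruct (Hlits l0 Hl0) as (l & Hl & Hxl & ->);
    exists l; refine (Logic.conj Hl (Logic.conj Hxl _)); intros z Hz Hzl;
    pose proof (sound_psat _ _ x Hsound Hx Himp Hxl) as Hxf;
    pose proof (sound_psat _ _ z Hsound Hz Himp Hzl) as Hzf.
  - tauto.
  - unfold psat in *; simpl in *; tauto.
Qed.

End Representative.

Section Saturation.
Context {Phi I : Type} {X : pointed Phi I -> Prop} {L D : form Phi I -> Prop}.
Hypotheses (HL : normal_logic L) (Hsound : sound L X) (HD : descriptor L D)
  (Hform : countable (form Phi I)) (Hsat : saturated X D L).

Lemma complete_descriptor (G : form Phi I -> Prop) :
  consistent L G -> (forall g, D g -> G g \/ G (Neg g)) ->
  descriptor L (fun a => D a /\ G a) /\ descriptor L (fun a => D a /\ G (Neg a)).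
Proof.
  intros HG Hdec.
  split; intros a b Hab [Ha HGa]; pose proof (HD a b Hab Ha) as Hb;
    split; try exact Hb; destruct (Lequiv_refute HL a b Hab) as [Hab' Hba'];
    destruct (Hdec b Hb) as [HGb|HGb]; auto; exfalso; apply HG.
  - exists [a; Neg b]. split; [intros c [<-|[<-|[]]]; auto|exact Hab'].
  - exists [Neg a; b]. split; [intros c [<-|[<-|[]]]; auto|exact Hba'].
Qed.

Lemma saturated_realizes (B : form Phi I -> Prop) :
  consistent L B -> exists (G : form Phi I -> Prop) (x : pointed Phi I),
    (forall a, B a -> G a) /\ consistent L G /\ X x /\
    forall p, D (snd p) -> psat x (lit p) -> G (lit p).
Proof.
  intros HB. destruct Hform as [code Hcode].
  destruct (lindenbaum HL code Hcode D B HB) as (G & HBG & HG & Hdec).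
  destruct (complete_descriptor G HG Hdec) as [HdG HdG'].
  destruct (Hsat (fun a => D a /\ G a) (fun a => D a /\ G (Neg a))
              (fun a H => proj1 H) (fun a H => proj1 H) HdG HdG') as (x & Hx & HxG).
  { apply (consistent_sub HG). intros c [[_ Hc]|(a & [_ Ha] & ->)]; assumption. }
  exists G, x. split; [exact HBG|split; [exact HG|split; [exact Hx|]]].
  intros [[|] g] Hg Hxp; simpl in *; destruct (Hdec g Hg) as [HGg|HGg]; auto; exfalso.
  - apply (HxG (Neg g)); [right; now exists g|exact Hxp].
  - apply Hxp, HxG. now left.
Qed.

Lemma saturated_finite_subcover (S : list (bool * form Phi I) -> Prop) :
  (forall l, S l -> D_lits D l) ->
  (forall x, X x -> exists l, S l /\ psat x (conj_lits l)) ->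
  exists ls, (forall l, In l ls -> S l) /\
    forall x, X x -> exists l, In l ls /\ psat x (conj_lits l).
Proof.
  intros HSD Hcover.
  set (B := fun a => exists l, S l /\ a = Neg (conj_lits l)).
  destruct (classic (consistent L B)) as [HB|HB].
  - exfalso. destruct (saturated_realizes B HB) as (G & x & HBG & HG & Hx & Hlit).
    destruct (Hcover x Hx) as (l & Hl & Hxl).
    apply HG. exists (Neg (conj_lits l) :: map lit l). split.
    + intros a [<-|Ha]; [apply HBG; now exists l|].
      apply in_map_iff in Ha as (p & <- & Hp).
      apply Hlit; [exact (HSD l Hl p Hp)|]. now apply psat_conj_lits with (l := l).
    + apply (nl_taut HL). intros v. unfold conj_lits; simpl.
      now destruct (peval v (conj (map lit l))).
  - apply NNPP in HB as (lf & Hlf & HLlf).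
    destruct (list_in_image S (fun l => Neg (conj_lits l)) lf Hlf) as (ls & Hls & ->).
    exists ls. split; [exact Hls|]. intros x Hx.
    pose proof (Hsound _ _ HLlf Hx) as Hxls. change (~ psat x (conj (map
      (fun l => Neg (conj_lits l)) ls))) in Hxls.
    rewrite psat_conj in Hxls. apply NNPP. intros Hnone. apply Hxls.
    intros a Ha. apply in_map_iff in Ha as (l & <- & Hl). intros Hxl. eauto.
Qed.

Lemma clopen_is_bracket (Y : (pointed Phi I -> Prop) -> Prop) :
  (forall c, Y c -> XD X D c) -> clopenD X D Y ->
  exists f, forall c, Y c <-> bracket X D f c.
Proof.
  intros HY [HYo HNo].
  rewrite (openD_iff X D Y HY) in HYo.
  rewrite (openD_iff X D _ (fun c Hc => proj1 Hc)) in HNo.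
  set (Yc := fun c => XD X D c /\ ~ Y c) in HNo.
  destruct (saturated_finite_subcover
              (fun l => D_lits D l /\ (basic_within X D Y l \/ basic_within X D Yc l)))
    as (ls & Hls & Hcover).
  { intros l [Hl _]; exact Hl. }
  { intros x Hx. destruct (classic (Y (xD X D x))) as [Hin|Hout].
    - destruct (HYo x Hx Hin) as (l & Hl & Hxl & Hsub). exists l. auto.
    - destruct (HNo x Hx) as (l & Hl & Hxl & Hsub); [split; [now exists x|exact Hout]|].
      exists l. auto. }
  destruct (list_split (basic_within X D Y) (basic_within X D Yc) ls)
    as (lY & HlY & Hsplit); [intros l Hl; apply (Hls l Hl)|].
  exists (disj (map conj_lits lY)). intros c. split.
  - intros Hc. destruct (HY c Hc) as (x & Hx & ->). split; [now exists x|].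
    intros z Hz. destruct (Hcover z (proj1 Hz)) as (l & Hl & Hzl).
    destruct (Hsplit l Hl) as [HinY|Hout].
    + apply psat_disj. exists (conj_lits l). split; [apply in_map, HinY|exact Hzl].
    + exfalso. apply (Hout x Hx); [|exact Hc].
      now apply (psat_conj_lits_xD X D x z l Hz (proj1 (Hls l Hl))).
  - intros [(x & Hx & ->) Hbr].
    pose proof (Hbr x (xD_self X D x Hx)) as Hxf.
    apply psat_disj in Hxf as (a & Ha & Hxa). apply in_map_iff in Ha as (l & <- & Hl).
    exact (HlY l Hl x Hx Hxa).
Qed.

Lemma saturated_reflects :
  (forall f, clopenD X D (bracket X D f)) -> reflects X D L.
Proof.
  intros Hbr Y HY. split; [now apply clopen_is_bracket|].
  intros [f Hf]. replace Y with (bracket X D f); [apply Hbr|].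
  extensionality c. apply propositional_extensionality. symmetry. apply Hf.
Qed.

End Saturation.

Theorem proposition25 (Phi I : Type)
  (cPhi : countable Phi) (cI : countable I) (nPhi : inhabited Phi) (nI : inhabited I)
  (X : pointed Phi I -> Prop) (L : form Phi I -> Prop)
  (HL : normal_logic L) (Hsound : sound L X)
  (D : form Phi I -> Prop) (HD : descriptor L D) :
  compact L -> representative L D ->
  (forall f : form Phi I, clopenD X D (bracket X D f)) /\
  (saturated X D L -> reflects X D L).
Proof.
  intros _ Hrep.
  assert (Hbr : forall f, clopenD X D (bracket X D f)).
  { intros f. apply bracket_clopen_of_decided. intros x Hx.
    now apply (representative_decided Hsound Hrep). }
  split; [exact Hbr|]. intros Hsat.
  exact (saturated_reflects HL Hsound HD (countable_form Phi I cPhi cI) Hsat Hbr).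
Qed.
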